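(* Assume the setting and hypotheses below, including $L>1$, and suppose $D_M(t)=kD(t)$ with $k>0$ and $D$ a positive continuous $T$-periodic function. Let $c^*(k)=\inf_{\mu>0}\frac1\mu\ln\int_{\mathbb{R}}e^{\mu y}\mathcal{K}(y)dy$ be the spreading speed with this $D_M$. Then $$\lim_{k\to+\infty}\frac{c^*(k)}{\sqrt k}=\inf_{\mu>0}H(\mu,+\infty)\in(0,+\infty),$$ where $$H(\mu,+\infty)=\frac1\mu\ln\Big(e^{\mu^2\int_0^TD(s)ds-\int_0^Td_M(s)ds}+\int_{t_\alpha}^{t_\beta}\partial_\varphi R(s,0)\,e^{-\left(\int_0^{s-\tau(s)}+\int_s^T\right)d_M(\omega)d\omega}\,e^{\mu^2\left(\int_0^{s-\tau(s)}+\int_s^T\right)D(\omega)d\omega}ds\Big).$$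
   Context: Setting. $T>0$; $D_I\ge0$, $d_M,d_I>0$, $\tau>0$, $p\ge0$ are $C^1$ $T$-periodic functions; $h\in C^1([0,\infty);[0,\infty))$; $0<\alpha\le\beta<t_\alpha\le t_\beta<T$ with $t_\alpha-\tau(t_\alpha)=\alpha$, $t_\beta-\tau(t_\beta)=\beta$, $p=0$ on $[0,\alpha]\cup[\beta,T]$; $\tau'<1$; $h(0)=0$, $h(z)\to0$ as $z\to\infty$, $h$ unimodal (increasing then decreasing); $h(\lambda z)\ge\lambda h(z)$ for $\lambda\in(0,1)$. Notation: $\partial_\varphi R(s,0)=(1-\tau'(s))e^{-\int_{s-\tau(s)}^sd_I}p(s-\tau(s))h'(0)$, $\sigma(s)=\int_{s-\tau(s)}^sD_I$, $\overline{k}_M(t,s)=e^{-\int_s^td_M}$, $L=\frac{\overline{k}_M(T,0)}{1-\overline{k}_M(T,0)}\int_{t_\alpha}^{t_\beta}\frac{\partial_\varphi R(s,0)}{\overline{k}_M(s,s-\tau(s))}ds$. The quantity $\int e^{\mu y}\mathcal{K}(y)dy$ equals $e^{\int_0^T[\mu^2D_M-d_M]}+\int_{t_\alpha}^{t_\beta}\partial_\varphi R(s,0)e^{(\int_s^T+\int_0^{s-\tau(s)})[\mu^2D_M(\varsigma)-d_M(\varsigma)]d\varsigma+\mu^2\sigma(s)}ds$. *)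

From Stdlib Require Import Reals Lra.
From Coquelicot Require Import Coquelicot.
Open Scope R_scope.

Definition periodic (T : R) (f : R -> R) : Prop := forall t, f (t + T) = f t.

Definition is_C1 (f : R -> R) : Prop :=
  forall t, ex_derive f t /\ continuous (Derive f) t.

Definition kM (dM : R -> R) (t s : R) : R := exp (- RInt dM s t).

(* partial_phi R(s,0) = (1-tau'(s)) e^{-int_{s-tau(s)}^s d_I} p(s-tau(s)) h'(0) *)
Definition dRphi (tau dI p : R -> R) (hp0 : R) (s : R) : R :=
  (1 - Derive tau s) * exp (- RInt dI (s - tau s) s) * p (s - tau s) * hp0.

Definition sigma (DI tau : R -> R) (s : R) : R := RInt DI (s - tau s) s.

Definition Lval (T : R) (dM tau dI p : R -> R) (hp0 ta tb : R) : R :=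
  kM dM T 0 / (1 - kM dM T 0) *
  RInt (fun s => dRphi tau dI p hp0 s / kM dM s (s - tau s)) ta tb.

(* int e^{mu y} K(y) dy, for a given diffusion coefficient D_M *)
Definition Kint (T : R) (DM dM DI tau dI p : R -> R) (hp0 ta tb mu : R) : R :=
  let g := fun v => mu ^ 2 * DM v - dM v in
  exp (RInt g 0 T) +
  RInt (fun s => dRphi tau dI p hp0 s *
                 exp (RInt g s T + RInt g 0 (s - tau s) + mu ^ 2 * sigma DI tau s))
       ta tb.

Definition cstar (T : R) (DM dM DI tau dI p : R -> R) (hp0 ta tb : R) : Rbar :=
  Glb_Rbar (fun c => exists mu, 0 < mu /\
              c = / mu * ln (Kint T DM dM DI tau dI p hp0 ta tb mu)).

Definition Hinf (T : R) (D dM tau dI p : R -> R) (hp0 ta tb mu : R) : R :=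
  / mu * ln (exp (mu ^ 2 * RInt D 0 T - RInt dM 0 T) +
             RInt (fun s => dRphi tau dI p hp0 s *
                            exp (- (RInt dM 0 (s - tau s) + RInt dM s T)) *
                            exp (mu ^ 2 * (RInt D 0 (s - tau s) + RInt D s T)))
                  ta tb).

Definition Hinf_inf (T : R) (D dM tau dI p : R -> R) (hp0 ta tb : R) : Rbar :=
  Glb_Rbar (fun c => exists mu, 0 < mu /\ c = Hinf T D dM tau dI p hp0 ta tb mu).

From Stdlib Require Import Reals Lra Classical.
From Coquelicot Require Import Coquelicot.
Open Scope R_scope.

(** With [D_M = k D] and [mu = nu / sqrt k], every exponent [int (mu^2 D_M - d_M)] of
    the kernel integral becomes [nu^2 int D - int d_M], so [Kint k mu] is the argument
    [Kinf nu] of the logarithm in [H(nu, +oo)], up to the weight [exp (mu^2 sigma(s))]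
    inside the [s]-integral. As [0 <= sigma <= S] on [[t_alpha, t_beta]],
    [Kinf nu <= Kint k mu <= exp (mu^2 S) Kinf nu]; taking [ln / mu] and infima gives
    [l <= c*(k) / sqrt k <= H(nu, +oo) + nu S / k] for every [nu > 0], where [l] is the
    infimum of [H(., +oo)], whence the limit. The infimum is positive because [L > 1]
    amounts to [Kinf 0 > 1], [Kinf] is nondecreasing, and
    [Kinf nu >= exp (nu^2 int_0^T D - int_0^T d_M)]. *)

Lemma exp_le x y : x <= y -> exp x <= exp y.
Proof. intros [Hxy | ->]; [left; apply exp_increasing|]; lra. Qed.

Lemma is_C1_continuous f : is_C1 f -> forall x, continuous f x.
Proof.
  intros Hf x; apply (ex_derive_continuous (K := R_AbsRing) (V := R_NormedModule)), Hf.
Qed.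

Lemma ex_RInt_of_continuous (f : R -> R) a b :
  (forall x, continuous f x) -> ex_RInt f a b.
Proof. intros Hf; apply (ex_RInt_continuous (V := R_CompleteNormedModule)); auto. Qed.

Lemma RInt_from_0 (f : R -> R) a b :
  (forall x, continuous f x) -> RInt f a b = RInt f 0 b - RInt f 0 a.
Proof.
  intros Hf.
  assert (H := RInt_Chasles f 0 a b
                 (ex_RInt_of_continuous f 0 a Hf) (ex_RInt_of_continuous f a b Hf)).
  change (plus (RInt f 0 a) (RInt f a b) = RInt f 0 b) in H.
  unfold plus in H; simpl in H; lra.
Qed.

Lemma RInt_scal_minus (f g : R -> R) c a b :
  (forall x, continuous f x) -> (forall x, continuous g x) ->
  RInt (fun v => c * f v - g v) a b = c * RInt f a b - RInt g a b.
Proof.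
  intros Hf Hg.
  rewrite <- (RInt_scal f a b c (ex_RInt_of_continuous f a b Hf)
                : RInt (fun v => c * f v) a b = c * RInt f a b).
  apply (RInt_minus (fun v => c * f v) g a b); apply ex_RInt_of_continuous; trivial.
  intros x; apply (continuous_scal_r (K := R_AbsRing) c f), Hf.
Qed.

Lemma continuous_RInt_upper (f : R -> R) x :
  (forall y, continuous f y) -> continuous (fun y => RInt f 0 y) x.
Proof.
  intros Hf.
  apply (ex_derive_continuous (K := R_AbsRing) (V := R_NormedModule)).
  exists (f x); apply (is_derive_RInt f (fun y => RInt f 0 y) 0 x); [|apply Hf].
  apply filter_forall; intros y.
  apply (RInt_correct (V := R_CompleteNormedModule)), ex_RInt_of_continuous, Hf.
Qed.

Lemma continuous_RInt_bounds (f a b : R -> R) x :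
  (forall y, continuous f y) -> (forall y, continuous a y) ->
  (forall y, continuous b y) -> continuous (fun s => RInt f (a s) (b s)) x.
Proof.
  intros Hf Ha Hb.
  apply (continuous_ext (fun s => RInt f 0 (b s) - RInt f 0 (a s))).
  { intros s; symmetry; apply RInt_from_0, Hf. }
  apply (continuous_minus (V := R_NormedModule)).
  - apply (continuous_comp b (fun y => RInt f 0 y)); auto using continuous_RInt_upper.
  - apply (continuous_comp a (fun y => RInt f 0 y)); auto using continuous_RInt_upper.
Qed.

Ltac solve_continuous :=
  repeat match goal with
  | |- continuous (fun _ => ?c) _ => apply continuous_const
  | |- continuous (fun y => y) _ => apply continuous_id
  | H : forall x, continuous ?f x |- continuous ?f _ => apply H
  | |- continuous (fun y => @?f y + @?g y) _ =>
      apply (continuous_plus (V := R_NormedModule) f g)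
  | |- continuous (fun y => @?f y - @?g y) _ =>
      apply (continuous_minus (V := R_NormedModule) f g)
  | |- continuous (fun y => - @?f y) _ =>
      apply (continuous_opp (V := R_NormedModule) f)
  | |- continuous (fun y => @?f y * @?g y) _ =>
      apply (continuous_mult (K := R_AbsRing) f g)
  | |- continuous (fun y => exp (@?u y)) _ => apply (continuous_exp_comp u)
  | |- continuous (fun y => RInt ?f (@?a y) (@?b y)) _ =>
      apply (continuous_RInt_bounds f a b); intro
  (* last, since it matches any application *)
  | |- continuous (fun y => ?g (@?u y)) _ => apply (continuous_comp u g)
  end.

Lemma RInt_mul_exp_bounds (f g : R -> R) a b c S :
  a <= b -> 0 <= c -> (forall x, continuous f x) -> (forall x, continuous g x) ->
  (forall x, 0 <= f x) -> (forall x, a <= x <= b -> 0 <= g x <= S) ->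
  RInt f a b <= RInt (fun s => f s * exp (c * g s)) a b <= exp (c * S) * RInt f a b.
Proof.
  intros Hab Hc Hf Hg Hf0 HgS.
  assert (Hfg : forall x, continuous (fun s => f s * exp (c * g s)) x)
    by (intros; solve_continuous).
  split.
  - apply RInt_le; auto using ex_RInt_of_continuous.
    intros x Hx; specialize (HgS x ltac:(lra)); specialize (Hf0 x).
    assert (1 <= exp (c * g x)) by (rewrite <- exp_0; apply exp_le; nra).
    nra.
  - rewrite <- (RInt_scal f a b (exp (c * S)) (ex_RInt_of_continuous f a b Hf)
                 : RInt (fun x => exp (c * S) * f x) a b = exp (c * S) * RInt f a b).
    apply RInt_le; auto using ex_RInt_of_continuous.
    + apply ex_RInt_of_continuous; intros; solve_continuous.
    + intros x Hx; specialize (HgS x ltac:(lra)); specialize (Hf0 x).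
      assert (exp (c * g x) <= exp (c * S)) by (apply exp_le; nra).
      nra.
Qed.

Lemma nonneg_of_right_limit (f : R -> R) a l :
  filterlim f (at_right a) (locally l) -> (forall z, a < z -> 0 <= f z) -> 0 <= l.
Proof.
  intros Hf Hpos.
  apply (closed_filterlim_loc f (fun u => 0 <= u) l Hf); [|apply closed_ge].
  exists (mkposreal 1 Rlt_0_1); intros z _ Hz; apply Hpos, Hz.
Qed.

Definition inf_log_rate (G : R -> R) : Rbar :=
  Glb_Rbar (fun c => exists mu, 0 < mu /\ c = / mu * ln (G mu)).

Section InfLogRate.

Variable G : R -> R.

Lemma inf_log_rate_finite m :
  (forall mu, 0 < mu -> m <= / mu * ln (G mu)) ->
  exists l, inf_log_rate G = Finite l /\ m <= l.
Proof.
  intros Hm.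
  destruct (Glb_Rbar_correct (fun c => exists mu, 0 < mu /\ c = / mu * ln (G mu)))
    as [Hlb Hglb]; fold (inf_log_rate G) in Hlb, Hglb.
  assert (Hge : Rbar_le m (inf_log_rate G))
    by (apply Hglb; intros x [mu [Hmu ->]]; apply Hm, Hmu).
  assert (Hle : Rbar_le (inf_log_rate G) (/ 1 * ln (G 1)))
    by (apply Hlb; exists 1; split; [lra | reflexivity]).
  destruct (inf_log_rate G) as [l | |]; simpl in *; try contradiction.
  exists l; split; trivial.
Qed.

Lemma inf_log_rate_le l mu :
  inf_log_rate G = Finite l -> 0 < mu -> l <= / mu * ln (G mu).
Proof.
  intros Hl Hmu.
  destruct (Glb_Rbar_correct (fun c => exists mu, 0 < mu /\ c = / mu * ln (G mu)))
    as [Hlb _].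
  fold (inf_log_rate G) in Hlb; rewrite Hl in Hlb.
  apply (Hlb (/ mu * ln (G mu))); exists mu; split; trivial.
Qed.

Lemma inf_log_rate_approx l eps :
  inf_log_rate G = Finite l -> 0 < eps ->
  exists mu, 0 < mu /\ / mu * ln (G mu) < l + eps.
Proof.
  intros Hl Heps.
  destruct (classic (exists mu, 0 < mu /\ / mu * ln (G mu) < l + eps)) as [H | H];
    trivial.
  destruct (Glb_Rbar_correct (fun c => exists mu, 0 < mu /\ c = / mu * ln (G mu)))
    as [_ Hglb].
  fold (inf_log_rate G) in Hglb; rewrite Hl in Hglb.
  assert (Hle : Rbar_le (l + eps) l).
  { apply Hglb; intros x [mu [Hmu ->]]; simpl.
    apply Rnot_lt_le; intros Hlt; apply H; exists mu; split; trivial. }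
  simpl in Hle; lra.
Qed.

End InfLogRate.

Lemma inf_log_rate_rescaled (G K : R -> R) s S l :
  0 < s -> inf_log_rate K = Finite l -> (forall nu, 0 < nu -> 0 < K nu) ->
  (forall mu, 0 < mu -> K (mu * s) <= G mu <= exp (mu ^ 2 * S) * K (mu * s)) ->
  exists c, inf_log_rate G = Finite c /\ l <= c / s /\
    forall nu, 0 < nu -> c / s <= / nu * ln (K nu) + nu * S / s ^ 2.
Proof.
  intros Hs Hl HK HGK.
  destruct (inf_log_rate_finite G (s * l)) as [c [Hc Hsl]].
  { intros mu Hmu.
    assert (Hnu : 0 < mu * s) by nra.
    assert (Hrate := inf_log_rate_le K l (mu * s) Hl Hnu).
    assert (Hln : ln (K (mu * s)) <= ln (G mu)) by (apply ln_le; [apply HK | apply HGK]; trivial).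
    replace (/ (mu * s)) with (/ mu * / s) in Hrate by (field; lra).
    assert (0 < / mu * / s) by (apply Rmult_lt_0_compat; apply Rinv_0_lt_compat; trivial).
    apply Rmult_le_reg_l with (/ s); [apply Rinv_0_lt_compat; trivial|].
    replace (/ s * (s * l)) with l by (field; lra).
    replace (/ s * (/ mu * ln (G mu))) with (/ mu * / s * ln (G mu)) by ring.
    apply Rle_trans with (1 := Hrate), Rmult_le_compat_l; lra. }
  exists c; split; [trivial | split].
  - apply Rmult_le_reg_l with s; trivial.
    replace (s * (c / s)) with c by (field; lra); trivial.
  - intros nu Hnu.
    set (mu := nu / s).
    assert (Hmu : 0 < mu) by (apply Rdiv_lt_0_compat; trivial).
    assert (Hmus : mu * s = nu) by (unfold mu; field; lra).
    destruct (HGK mu Hmu) as [HG1 HG2]; rewrite Hmus in HG1, HG2.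
    assert (HKnu := HK nu Hnu).
    assert (HlnG : ln (G mu) <= mu ^ 2 * S + ln (K nu)).
    { rewrite <- (ln_exp (mu ^ 2 * S)), <- ln_mult by (trivial || apply exp_pos).
      apply ln_le; lra. }
    assert (Hcmu := inf_log_rate_le G c mu Hc Hmu).
    apply Rle_trans with (/ s * (/ mu * (mu ^ 2 * S + ln (K nu)))).
    + unfold Rdiv; rewrite Rmult_comm.
      apply Rmult_le_compat_l; [left; apply Rinv_0_lt_compat; trivial|].
      apply Rle_trans with (/ mu * ln (G mu)); trivial.
      apply Rmult_le_compat_l; [left; apply Rinv_0_lt_compat|]; trivial.
    + right; unfold mu; field; lra.
Qed.

Lemma inf_log_rate_pos (K : R -> R) A B :
  0 < A -> 0 <= B -> 1 < K 0 ->
  (forall nu, K 0 <= K nu) -> (forall nu, exp (nu ^ 2 * A - B) <= K nu) ->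
  exists l, inf_log_rate K = Finite l /\ 0 < l.
Proof.
  intros HA HB HK0 Hmono Hgrowth.
  (* beyond [nu0], [nu ^ 2 * A - B >= nu] *)
  set (nu0 := 1 + (B + 1) / A).
  assert (Hnu0 : 1 < nu0).
  { assert (0 < (B + 1) / A) by (apply Rdiv_lt_0_compat; lra); unfold nu0; lra. }
  assert (Hlog0 := ln_increasing 1 (K 0) Rlt_0_1 HK0); rewrite ln_1 in Hlog0.
  destruct (inf_log_rate_finite K (Rmin (ln (K 0) / nu0) 1)) as [l [Hl Hml]].
  2:{ exists l; split; trivial.
      eapply Rlt_le_trans; [|exact Hml].
      apply Rmin_glb_lt; [apply Rdiv_lt_0_compat|]; lra. }
  intros nu Hnu.
  assert (Hinv : 0 < / nu) by (apply Rinv_0_lt_compat; trivial).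
  destruct (Rle_lt_dec nu nu0) as [Hsmall | Hlarge].
  - apply Rle_trans with (ln (K 0) / nu0); [apply Rmin_l|].
    assert (ln (K 0) <= ln (K nu)) by (apply ln_le; [lra | apply Hmono]).
    assert (/ nu0 <= / nu) by (apply Rinv_le_contravar; trivial).
    unfold Rdiv; rewrite Rmult_comm; nra.
  - apply Rle_trans with 1; [apply Rmin_r|].
    assert (Hln : nu ^ 2 * A - B <= ln (K nu))
      by (rewrite <- (ln_exp (nu ^ 2 * A - B)); apply ln_le; [apply exp_pos | apply Hgrowth]).
    assert (Hquad : nu <= nu ^ 2 * A - B).
    { assert (nu0 * A = A + B + 1) by (unfold nu0; field; lra).
      assert (nu * (nu0 * A) <= nu * (nu * A)) by
        (apply Rmult_le_compat_l; [lra | apply Rmult_le_compat_r; lra]).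
      simpl; nra. }
    replace 1 with (/ nu * nu) by (field; lra).
    apply Rmult_le_compat_l; lra.
Qed.

Lemma is_lim_squeeze_inf (q H : R -> R) l S :
  0 <= S ->
  (forall eps, 0 < eps -> exists nu, 0 < nu /\ H nu < l + eps) ->
  (forall k, 0 < k -> l <= q k /\ forall nu, 0 < nu -> q k <= H nu + nu * S / k) ->
  is_lim q p_infty l.
Proof.
  intros HS Happrox Hq.
  apply is_lim_spec; intros eps; simpl.
  assert (Heps : 0 < eps / 2) by (destruct eps; simpl; lra).
  destruct (Happrox (eps / 2) Heps) as [nu [Hnu HHnu]].
  exists (Rmax 1 (2 * nu * S / eps)); intros k Hk.
  assert (Hk1 : 1 < k) by (eapply Rle_lt_trans; [apply Rmax_l | exact Hk]).
  assert (Hk2 : 2 * nu * S / eps < k) by (eapply Rle_lt_trans; [apply Rmax_r | exact Hk]).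
  destruct (Hq k ltac:(lra)) as [Hlow Hup]; specialize (Hup nu Hnu).
  assert (Hpos := cond_pos eps).
  assert (Hsmall : nu * S / k < eps / 2).
  { apply Rmult_lt_reg_r with (2 * k / eps); [apply Rdiv_lt_0_compat; lra|].
    replace (nu * S / k * (2 * k / eps)) with (2 * nu * S / eps) by (field; lra).
    replace (eps / 2 * (2 * k / eps)) with k by (field; lra); trivial. }
  apply Rabs_def1; lra.
Qed.

Section ScaledDiffusion.

Variables (T : R) (D dM DI dI tau p : R -> R) (hp0 ta tb : R).

Hypotheses (HT : 0 < T) (Hta : 0 <= ta - tau ta) (Hab : ta <= tb) (HtbT : tb <= T).
Hypotheses (cont_D : forall x, continuous D x) (D_pos : forall x, 0 < D x).
Hypotheses (cont_dM : forall x, continuous dM x) (dM_pos : forall x, 0 < dM x).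
Hypotheses (cont_DI : forall x, continuous DI x) (DI_nonneg : forall x, 0 <= DI x).
Hypotheses (cont_dI : forall x, continuous dI x).
Hypotheses (cont_p : forall x, continuous p x) (p_nonneg : forall x, 0 <= p x).
Hypotheses (tau_derivable : forall x, ex_derive tau x) (tau_pos : forall x, 0 < tau x)
  (cont_Dtau : forall x, continuous (Derive tau) x) (Dtau_lt_1 : forall x, Derive tau x < 1).
Hypothesis hp0_nonneg : 0 <= hp0.

Let cont_tau x : continuous tau x.
Proof. apply (ex_derive_continuous (K := R_AbsRing) (V := R_NormedModule)), tau_derivable. Qed.

Definition Einf (nu s : R) : R :=
  dRphi tau dI p hp0 s * exp (- (RInt dM 0 (s - tau s) + RInt dM s T)) *
  exp (nu ^ 2 * (RInt D 0 (s - tau s) + RInt D s T)).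

Definition Kinf (nu : R) : R :=
  exp (nu ^ 2 * RInt D 0 T - RInt dM 0 T) + RInt (Einf nu) ta tb.

Lemma delay_nondecreasing s : ta <= s -> ta - tau ta <= s - tau s.
Proof.
  intros [Hlt | ->]; [left | right; reflexivity].
  apply (incr_function (fun s => s - tau s) m_infty p_infty (fun x => 1 - Derive tau x));
    simpl; trivial.
  - intros x _ _; auto_derive; [apply tau_derivable|].
    unfold Rminus; rewrite Rmult_1_l; reflexivity.
  - intros x _ _; specialize (Dtau_lt_1 x); lra.
Qed.

Lemma dRphi_nonneg s : 0 <= dRphi tau dI p hp0 s.
Proof.
  unfold dRphi.
  assert (0 < 1 - Derive tau s) by (specialize (Dtau_lt_1 s); lra).
  assert (0 < exp (- RInt dI (s - tau s) s)) by apply exp_pos.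
  assert (0 <= p (s - tau s)) by apply p_nonneg.
  apply Rmult_le_pos; trivial; apply Rmult_le_pos; trivial; nra.
Qed.

Lemma continuous_dRphi x : continuous (dRphi tau dI p hp0) x.
Proof. unfold dRphi; solve_continuous. Qed.

Lemma Einf_nonneg nu s : 0 <= Einf nu s.
Proof.
  unfold Einf; assert (Hd := dRphi_nonneg s).
  assert (H1 := exp_pos (- (RInt dM 0 (s - tau s) + RInt dM s T))).
  assert (H2 := exp_pos (nu ^ 2 * (RInt D 0 (s - tau s) + RInt D s T))).
  apply Rmult_le_pos; [apply Rmult_le_pos|]; lra.
Qed.

Lemma continuous_Einf nu x : continuous (Einf nu) x.
Proof. assert (Hd := continuous_dRphi); unfold Einf; solve_continuous. Qed.

Lemma sigma_nonneg s : 0 <= sigma DI tau s.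
Proof.
  unfold sigma; apply RInt_ge_0; auto using ex_RInt_of_continuous.
  specialize (tau_pos s); lra.
Qed.

Lemma continuous_sigma x : continuous (sigma DI tau) x.
Proof. unfold sigma; solve_continuous. Qed.

Lemma sigma_bounded : exists S, forall s, ta <= s <= tb -> 0 <= sigma DI tau s <= S.
Proof.
  assert (Hcont : forall x, ta <= x <= tb -> continuity_pt (sigma DI tau) x).
  { intros x _; apply continuity_pt_filterlim, continuous_sigma. }
  destruct (continuity_ab_maj (sigma DI tau) ta tb Hab Hcont) as [smax [Hmax _]].
  exists (sigma DI tau smax); intros s Hs; split; [apply sigma_nonneg | apply Hmax, Hs].
Qed.

Lemma Kinf_ge_exp nu : exp (nu ^ 2 * RInt D 0 T - RInt dM 0 T) <= Kinf nu.
Proof.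
  unfold Kinf.
  assert (0 <= RInt (Einf nu) ta tb); [|lra].
  apply RInt_ge_0; [exact Hab | apply ex_RInt_of_continuous, continuous_Einf |].
  intros; apply Einf_nonneg.
Qed.

Lemma Kinf_ge_Kinf0 nu : Kinf 0 <= Kinf nu.
Proof.
  assert (HD : forall a b, a <= b -> 0 <= RInt D a b).
  { intros a b Hle; apply RInt_ge_0; auto using ex_RInt_of_continuous.
    intros; left; apply D_pos. }
  assert (HA := HD 0 T ltac:(lra)).
  unfold Kinf; apply Rplus_le_compat.
  - apply exp_le; assert (0 <= nu ^ 2) by apply pow2_ge_0; simpl; nra.
  - apply RInt_le; [exact Hab | apply ex_RInt_of_continuous, continuous_Einf ..|].
    intros s Hs; unfold Einf.
    apply Rmult_le_compat_l; [apply Rmult_le_pos; [apply dRphi_nonneg | left; apply exp_pos]|].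
    assert (Hdelay := delay_nondecreasing s ltac:(lra)).
    assert (0 <= RInt D 0 (s - tau s)) by (apply HD; lra).
    assert (0 <= RInt D s T) by (apply HD; lra).
    apply exp_le; assert (0 <= nu ^ 2) by apply pow2_ge_0; simpl; nra.
Qed.

Lemma Kinf0_gt_1 : Lval T dM tau dI p hp0 ta tb > 1 -> 1 < Kinf 0.
Proof.
  intros HL.
  set (B := RInt dM 0 T).
  assert (HB : 0 < B) by (apply RInt_gt_0; auto; intros; apply dM_pos).
  assert (HeB : exp (- B) < 1) by (rewrite <- exp_0; apply exp_increasing; lra).
  assert (Hpoint : forall s, dRphi tau dI p hp0 s / kM dM s (s - tau s) = exp B * Einf 0 s).
  { intros s; unfold Einf, kM.
    rewrite (RInt_from_0 dM (s - tau s) s), (RInt_from_0 dM s T) by trivial; fold B.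
    rewrite exp_Ropp; unfold Rdiv; rewrite Rinv_inv.
    replace (0 ^ 2 * (RInt D 0 (s - tau s) + RInt D s T)) with 0 by ring.
    replace (RInt dM 0 s - RInt dM 0 (s - tau s))
      with (B + - (RInt dM 0 (s - tau s) + (B - RInt dM 0 s))) by ring.
    rewrite exp_0, exp_plus; ring. }
  assert (HJ : RInt (fun s => dRphi tau dI p hp0 s / kM dM s (s - tau s)) ta tb =
               exp B * RInt (Einf 0) ta tb).
  { rewrite <- (RInt_scal (Einf 0) ta tb (exp B) (ex_RInt_of_continuous _ _ _ (continuous_Einf 0))
                : RInt (fun s => exp B * Einf 0 s) ta tb = exp B * RInt (Einf 0) ta tb).
    apply RInt_ext; intros s _; apply Hpoint. }
  unfold Lval, kM in HL; fold B in HL; unfold kM in HJ; rewrite HJ in HL.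
  unfold Kinf; replace (0 ^ 2 * RInt D 0 T - RInt dM 0 T) with (- B) by (unfold B; ring).
  set (J0 := RInt (Einf 0) ta tb : R) in *; set (E := exp (- B)) in *.
  assert (HE : E * exp B = 1) by (unfold E; rewrite <- exp_plus, Rplus_opp_l; apply exp_0).
  assert (HE0 : 0 < E) by apply exp_pos.
  replace (E / (1 - E) * (exp B * J0)) with (E * exp B * J0 / (1 - E)) in HL by (field; lra).
  rewrite HE, Rmult_1_l in HL.
  assert (J0 = J0 / (1 - E) * (1 - E)) by (field; lra).
  nra.
Qed.

Lemma Kint_scaled k mu : 0 < k ->
  Kint T (fun t => k * D t) dM DI tau dI p hp0 ta tb mu =
  exp ((mu * sqrt k) ^ 2 * RInt D 0 T - RInt dM 0 T) +
  RInt (fun s => Einf (mu * sqrt k) s * exp (mu ^ 2 * sigma DI tau s)) ta tb.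
Proof.
  intros Hk; set (nu := mu * sqrt k).
  assert (Hnu : nu ^ 2 = mu ^ 2 * k) by (unfold nu; rewrite Rpow_mult_distr, pow2_sqrt; lra).
  assert (Hg : forall a b, RInt (fun v => mu ^ 2 * (k * D v) - dM v) a b =
                           nu ^ 2 * RInt D a b - RInt dM a b).
  { intros a b; rewrite <- RInt_scal_minus by trivial.
    apply RInt_ext; intros v _; f_equal; rewrite Hnu; ring. }
  unfold Kint; cbv zeta; f_equal; [f_equal; apply Hg|].
  apply RInt_ext; intros s _; unfold Einf; rewrite !Hg, !Rmult_assoc; f_equal.
  rewrite <- !exp_plus; f_equal; ring.
Qed.

Lemma Kint_scaled_bounds S k mu :
  (forall s, ta <= s <= tb -> 0 <= sigma DI tau s <= S) -> 0 < k ->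
  Kinf (mu * sqrt k) <= Kint T (fun t => k * D t) dM DI tau dI p hp0 ta tb mu <=
  exp (mu ^ 2 * S) * Kinf (mu * sqrt k).
Proof.
  intros HS Hk; rewrite Kint_scaled by trivial; unfold Kinf.
  destruct (RInt_mul_exp_bounds (Einf (mu * sqrt k)) (sigma DI tau) ta tb (mu ^ 2) S)
    as [Hlow Hup]; auto using continuous_Einf, continuous_sigma, Einf_nonneg, pow2_ge_0.
  assert (0 <= S) by (destruct (HS ta); lra).
  assert (1 <= exp (mu ^ 2 * S))
    by (rewrite <- exp_0; apply exp_le, Rmult_le_pos; [apply pow2_ge_0 | trivial]).
  assert (0 < exp ((mu * sqrt k) ^ 2 * RInt D 0 T - RInt dM 0 T)) by apply exp_pos.
  split; nra.
Qed.

Lemma cstar_over_sqrt_bounds l S k :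
  Lval T dM tau dI p hp0 ta tb > 1 -> inf_log_rate Kinf = Finite l ->
  (forall s, ta <= s <= tb -> 0 <= sigma DI tau s <= S) -> 0 < k ->
  exists c, cstar T (fun t => k * D t) dM DI tau dI p hp0 ta tb = Finite c /\
    l <= c / sqrt k /\ forall nu, 0 < nu -> c / sqrt k <= / nu * ln (Kinf nu) + nu * S / k.
Proof.
  intros HL Hl HS Hk.
  assert (HKpos : forall nu, 0 < nu -> 0 < Kinf nu).
  { intros nu _; apply Rlt_le_trans with (Kinf 0); [|apply Kinf_ge_Kinf0].
    apply Rlt_trans with 1; [lra | apply Kinf0_gt_1, HL]. }
  destruct (inf_log_rate_rescaled (Kint T (fun t => k * D t) dM DI tau dI p hp0 ta tb)
              Kinf (sqrt k) S l) as [c [Hc [Hlow Hup]]];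
    auto using sqrt_lt_R0, Kint_scaled_bounds.
  rewrite pow2_sqrt in Hup by lra; exists c; auto.
Qed.

Theorem cstar_over_sqrt_limit : Lval T dM tau dI p hp0 ta tb > 1 ->
  exists l : R, 0 < l /\ Hinf_inf T D dM tau dI p hp0 ta tb = Finite l /\
    (forall k, 0 < k -> is_finite (cstar T (fun t => k * D t) dM DI tau dI p hp0 ta tb)) /\
    is_lim (fun k => real (cstar T (fun t => k * D t) dM DI tau dI p hp0 ta tb) / sqrt k)
      p_infty l.
Proof.
  intros HL.
  assert (HA : 0 < RInt D 0 T) by (apply RInt_gt_0; auto).
  assert (HB : 0 <= RInt dM 0 T).
  { apply RInt_ge_0; [lra | apply ex_RInt_of_continuous, cont_dM |].
    intros; left; apply dM_pos. }
  destruct (inf_log_rate_pos Kinf _ _ HA HB (Kinf0_gt_1 HL) Kinf_ge_Kinf0 Kinf_ge_exp)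
    as [l [Hl Hlpos]].
  destruct sigma_bounded as [S HS].
  assert (HS0 : 0 <= S) by (destruct (HS ta); lra).
  exists l; split; [trivial | split; [exact Hl | split]].
  - intros k Hk; destruct (cstar_over_sqrt_bounds l S k HL Hl HS Hk) as [c [-> _]].
    reflexivity.
  - apply (is_lim_squeeze_inf _ (fun nu => / nu * ln (Kinf nu)) l S HS0).
    + intros eps Heps; exact (inf_log_rate_approx Kinf l eps Hl Heps).
    + intros k Hk; destruct (cstar_over_sqrt_bounds l S k HL Hl HS Hk) as [c [-> Hc]].
      exact Hc.
Qed.

End ScaledDiffusion.

Theorem proposition4p6
  (T : R) (DI dM dI tau p : R -> R) (h : R -> R) (hp0 : R)
  (alpha beta ta tb : R) (D : R -> R)
  (* periodic C^1 coefficients *)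
  (HT : 0 < T)
  (HDI : is_C1 DI /\ periodic T DI /\ forall t, 0 <= DI t)
  (HdM : is_C1 dM /\ periodic T dM /\ forall t, 0 < dM t)
  (HdI : is_C1 dI /\ periodic T dI /\ forall t, 0 < dI t)
  (Htau : is_C1 tau /\ periodic T tau /\ forall t, 0 < tau t)
  (Hp : is_C1 p /\ periodic T p /\ forall t, 0 <= p t)
  (Htau' : forall t, Derive tau t < 1)
  (* h in C^1([0,oo);[0,oo)); hp0 = h'(0) (right derivative) *)
  (Hh_nonneg : forall z, 0 <= z -> 0 <= h z)
  (Hh_C1 : forall z, 0 < z -> ex_derive h z /\ continuous (Derive h) z)
  (Hh_cont0 : filterlim h (at_right 0) (locally (h 0)))
  (Hh_der0 : filterlim (fun z => (h z - h 0) / z) (at_right 0) (locally hp0))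
  (Hh_derc0 : filterlim (Derive h) (at_right 0) (locally hp0))
  (Hh0 : h 0 = 0)
  (Hhinf : is_lim h p_infty 0)
  (Hh_unimodal : exists z0, 0 <= z0 /\
      (forall x y, 0 <= x -> x <= y -> y <= z0 -> h x <= h y) /\
      (forall x y, z0 <= x -> x <= y -> h y <= h x))
  (Hh_sub : forall lam z, 0 < lam < 1 -> 0 <= z -> lam * h z <= h (lam * z))
  (* the time window of reproduction *)
  (Hord : 0 < alpha /\ alpha <= beta /\ beta < ta /\ ta <= tb /\ tb < T)
  (Hta : ta - tau ta = alpha) (Htb : tb - tau tb = beta)
  (Hp0 : forall t, (0 <= t <= alpha \/ beta <= t <= T) -> p t = 0)
  (HL : Lval T dM tau dI p hp0 ta tb > 1)
  (* D_M = k D with D positive continuous T-periodic *)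
  (HD : (forall t, continuous D t) /\ periodic T D /\ forall t, 0 < D t) :
  exists l : R,
    0 < l /\
    Hinf_inf T D dM tau dI p hp0 ta tb = Finite l /\
    (exists K0, forall k, K0 < k ->
        is_finite (cstar T (fun t => k * D t) dM DI tau dI p hp0 ta tb)) /\
    is_lim (fun k => real (cstar T (fun t => k * D t) dM DI tau dI p hp0 ta tb) / sqrt k)
           p_infty l.
Proof.
  destruct HDI as [HDI_C1 [_ DI_nonneg]], HdM as [HdM_C1 [_ dM_pos]].
  destruct HdI as [HdI_C1 _], Htau as [Htau_C1 [_ tau_pos]], Hp as [Hp_C1 [_ p_nonneg]].
  destruct HD as [cont_D [_ D_pos]].
  assert (hp0_nonneg : 0 <= hp0).
  { apply (nonneg_of_right_limit _ 0 hp0 Hh_der0); intros z Hz.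
    rewrite Hh0, Rminus_0_r; unfold Rdiv.
    apply Rmult_le_pos; [apply Hh_nonneg; lra | left; apply Rinv_0_lt_compat, Hz]. }
  assert (tau_derivable : forall x, ex_derive tau x) by (intros x; apply Htau_C1).
  assert (cont_Dtau : forall x, continuous (Derive tau) x) by (intros x; apply Htau_C1).
  destruct (cstar_over_sqrt_limit T D dM DI dI tau p hp0 ta tb)
    as (l & Hl & Hinf & Hfin & Hlim); auto using is_C1_continuous; try lra.
  exists l; repeat split; trivial.
  exists 0; exact Hfin.
Qed.
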